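(* For $n$ a power of 2, for all but an $o(1)$ fraction (as $n\to\infty$) of the sets $A\subseteq\{0,1\}^{\log n}$ with $|A|=n/2$, every classical probabilistic property tester for $P_A=\{x\in\{0,1\}^n:\exists y\in A,\ x=h(y)\}$ with distance parameter $1/3$ (even allowing two-sided error) makes $\Omega(\log n)$ queries.
   Context: Logarithms are base 2. Positions $i\in\{1,\dots,n\}$ are identified with vectors in $\mathbb{F}_2^{\log n}$; the Hadamard code of $y\in\{0,1\}^{\log n}$ is $h(y)\in\{0,1\}^n$ with $h(y)_i=y\cdot i$ over $\mathbb{F}_2$. For $P\subseteq\{0,1\}^n$, $x$ is $\epsilon$-far from $P$ if it differs from every element of $P$ in more than $\epsilon n$ positions. A classical property tester for $P$ with distance parameter $\epsilon$ is a probabilistic (possibly adaptive) algorithm with query access to the bits of $x$ that accepts every $x\in P$ with probability at least $2/3$ and every $x$ that is $\epsilon$-far from $P$ with probability at most $1/3$; its complexity is the number of queries. *)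

From HB Require Import structures.
From mathcomp Require Import all_boot all_order all_algebra.
From mathcomp Require Import reals.
Set Implicit Arguments. Unset Strict Implicit. Unset Printing Implicit Defensive.
Import Order.TTheory GRing.Theory Num.Theory.
Local Open Scope ring_scope.

(* Vectors of F_2^k, k = log n; positions of an n-bit string, n = 2^k,
   are identified with such vectors. *)
Definition vec (k : nat) := {ffun 'I_k -> bool}.

Definition word (k : nat) := {ffun vec k -> bool}.

Definition dotF2 (k : nat) (y i : vec k) : bool :=
  \big[addb/false]_(j < k) (y j && i j).

Definition hadamard (k : nat) (y : vec k) : word k := [ffun i => dotF2 y i].

Definition PA (k : nat) (A : {set vec k}) (x : word k) : Prop :=
  exists2 y, y \in A & x = hadamard y.

Definition hdist (k : nat) (x z : word k) : nat := #|[set i | x i != z i]|.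

Definition far (R : realFieldType) (k : nat) (P : word k -> Prop) (eps : R) (x : word k) : Prop :=
  forall z, P z -> eps * (2 ^ k)%:R < (hdist x z)%:R.

(* Deterministic adaptive query algorithms = decision trees *)
Inductive dtree (I : Type) : Type :=
| Leaf of bool
| Query of I & dtree I & dtree I.
Arguments Leaf {I} b.
Arguments Query {I} i t0 t1.

Fixpoint run (I : Type) (t : dtree I) (x : I -> bool) : bool :=
  match t with
  | Leaf b => b
  | Query i t0 t1 => if x i then run t1 x else run t0 x
  end.

Fixpoint depth (I : Type) (t : dtree I) : nat :=
  match t with
  | Leaf _ => 0
  | Query _ t0 t1 => (maxn (depth t0) (depth t1)).+1
  end.

(* Probabilistic (adaptive) query algorithm: a probability distribution
   (finitely supported; the set of trees of bounded depth is finite) over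
   deterministic decision trees. *)
Record prob_alg (R : realFieldType) (I : Type) := ProbAlg {
  pa_supp : seq (R * dtree I);
  pa_nonneg : all (fun p => 0 <= p.1) pa_supp;
  pa_sum1 : \sum_(p <- pa_supp) p.1 = 1 }.

Definition acc_prob (R : realFieldType) (I : Type) (T : prob_alg R I) (x : I -> bool) : R :=
  \sum_(p <- pa_supp T | run p.2 x) p.1.

Definition query_cplx (R : realFieldType) (I : Type) (T : prob_alg R I) : nat :=
  \max_(p <- pa_supp T) depth p.2.

Definition is_tester (R : realFieldType) (k : nat) (P : word k -> Prop) (eps : R)
    (T : prob_alg R (vec k)) : Prop :=
  (forall x : word k, P x -> 2 / 3 <= acc_prob T x) /\
  (forall x : word k, far P eps x -> acc_prob T x <= 1 / 3).

From HB Require Import structures.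
From mathcomp Require Import all_boot all_order all_algebra.
From mathcomp Require Import reals.
From mathcomp Require Import zify ring lra.
Import Order.TTheory GRing.Theory Num.Theory.
Set Implicit Arguments. Unset Strict Implicit. Unset Printing Implicit Defensive.

(* Distinct Hadamard codewords are at distance exactly n/2 > n/3, so a tester
   for P_A accepts h(y) with probability >= 2/3 for y in A and <= 1/3 for y
   outside A.  Averaging over its random choices gives one decision tree t of
   depth at most the query complexity q whose set of accepted codewords is
   within distance n/3 of A.  But there are only 2^O(k 2^q) trees of depth q,
   and a set has at most 3^n / 2^(2n/3) sets within distance n/3, which for
   q = (k - 1)/8 is a vanishing fraction of the binomial(n, n/2) sets A. *)

Lemma leq_binS n i : i < n - i -> 'C(n, i) <= 'C(n, i.+1).
Proof.
by move=> lt_i; rewrite -(leq_pmul2l (ltn0Sn i)) mul_bin_left leq_mul.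
Qed.

Lemma leq_bin_half n i : 'C(n, i) <= 'C(n, n./2).
Proof.
have halves := odd_double_half n; rewrite -addnn in halves.
have mono d j : j + d <= n./2 -> 'C(n, j) <= 'C(n, j + d).
  elim: d => [|d IH] le_jd; first by rewrite addn0.
  apply: leq_trans (IH _) _; first lia.
  by rewrite addnS leq_binS //; case: (odd n) halves; lia.
have up j : j <= n./2 -> 'C(n, j) <= 'C(n, n./2).
  by move=> le_j; have := mono _ j (eq_leq (subnKC le_j)); rewrite subnKC.
have [|lt_i] := leqP i n./2; first exact: up.
have [le_in|lt_ni] := leqP i n; last by rewrite bin_small.
by rewrite -bin_sub // up //; case: (odd n) halves; lia.
Qed.

Lemma exp2n_leq_bin_half n : 2 ^ n <= n.+1 * 'C(n, n./2).
Proof.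
have -> : 2 ^ n = \sum_(i < n.+1) 'C(n, i).
  by rewrite -[2]/(1 + 1) expnDn; apply: eq_bigr => i _; rewrite !exp1n !muln1.
rewrite -[n.+1 in X in _ <= X]card_ord -sum_nat_const.
by apply: leq_sum => i _; apply: leq_bin_half.
Qed.

Lemma card_sets_leq (T : finType) m :
  #|[set D : {set T} | #|D| <= m]| = \sum_(d < m.+1) 'C(#|T|, d).
Proof.
elim: m => [|m IH].
  by rewrite big_ord1 -card_draws; apply: eq_card => D; rewrite !inE leqn0.
rewrite big_ord_recr /= -IH -card_draws.
have -> : [set D : {set T} | #|D| <= m.+1] =
          [set D : {set T} | #|D| <= m] :|: [set D : {set T} | #|D| == m.+1].
  by apply/setP => D; rewrite !inE leq_eqVlt ltnS orbC.
rewrite cardsU (_ : _ :&: _ = set0) ?cards0 ?subn0 //.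
apply/setP => D; rewrite !inE.
by case: (#|D| =P m.+1) => [->|_]; rewrite ?ltnn ?andbF.
Qed.

Lemma card_sets_leq_bound (T : finType) m : m <= #|T| ->
  #|[set D : {set T} | #|D| <= m]| * 2 ^ (#|T| - m) <= 3 ^ #|T|.
Proof.
move=> le_m; rewrite card_sets_leq big_distrl /= -[3]/(2 + 1) expnDn.
rewrite (big_ord_widen #|T|.+1 (fun i => 'C(#|T|, i) * 2 ^ (#|T| - m))) ?ltnS //.
rewrite big_mkcond /=; apply: leq_sum => i _; rewrite exp1n muln1.
by case: ifP => // le_i; rewrite leq_mul2l leq_pexp2l //; lia.
Qed.

Lemma card_vec k : #|vec k| = 2 ^ k.
Proof. by rewrite card_ffun card_bool card_ord. Qed.

Definition vxor k (y z : vec k) : vec k := [ffun j => y j (+) z j].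

Definition flip_coord k (j0 : 'I_k) (i : vec k) : vec k := [ffun j => (j == j0) (+) i j].

Lemma flip_coordK k (j0 : 'I_k) : involutive (flip_coord j0).
Proof. by move=> i; apply/ffunP => j; rewrite !ffunE addbA addbb. Qed.

Lemma dotF2_xor k (y z i : vec k) : dotF2 (vxor y z) i = dotF2 y i (+) dotF2 z i.
Proof.
by rewrite /dotF2 -big_split; apply: eq_bigr => j _; rewrite ffunE andb_addl.
Qed.

Lemma dotF2_flip k (w : vec k) j0 i : dotF2 w (flip_coord j0 i) = w j0 (+) dotF2 w i.
Proof.
rewrite /dotF2 (eq_bigr (fun j => (w j && (j == j0)) (+) (w j && i j))) => [|j _].
  rewrite big_split /= (bigD1 j0) //= eqxx andbT big1 ?addbF // => j /negbTE ->.
  exact: andbF.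
by rewrite ffunE andb_addr.
Qed.

Lemma card_dotF2 k (w : vec k) j0 : w j0 -> 2 * #|[set i | dotF2 w i]| = 2 ^ k.
Proof.
move=> w_j0.
have card_neg : #|[set i | ~~ dotF2 w i]| = #|[set i | dotF2 w i]|.
  rewrite -[RHS](card_preimset _ (inv_inj (flip_coordK j0))); apply: eq_card => i.
  by rewrite !inE dotF2_flip w_j0.
rewrite mul2n -addnn -{1}card_neg addnC -card_vec -(cardsC [set i | dotF2 w i]).
by congr (_ + _); apply: eq_card => i; rewrite !inE.
Qed.

Lemma hdist_hadamard k (y z : vec k) :
  y != z -> 2 * hdist (hadamard y) (hadamard z) = 2 ^ k.
Proof.
move=> /eqP neq_yz.
have [j0 yz_j0] : exists j0, vxor y z j0.
  apply/existsP; apply: contra_notT neq_yz => /existsPn diff0.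
  by apply/ffunP => j; have := diff0 j; rewrite ffunE; case: (y j); case: (z j).
rewrite -(card_dotF2 yz_j0); congr (_ * _); apply: eq_card => i.
by rewrite !inE !ffunE dotF2_xor; case: (dotF2 y i); case: (dotF2 z i).
Qed.

(* Complete decision trees of depth [q]; unlike [dtree] they form a finite type. *)
Fixpoint ctree (k q : nat) : finType :=
  if q is q'.+1 then (vec k * ctree k q' * ctree k q')%type else bool.

Fixpoint crun (k q : nat) : ctree k q -> (vec k -> bool) -> bool :=
  if q is q'.+1 return ctree k q -> (vec k -> bool) -> bool then
    fun t x => if x t.1.1 then crun t.2 x else crun t.1.2 x
  else fun b _ => b.

Lemma card_ctree k q : #|ctree k q| <= 2 ^ (k.+1 * (2 ^ q.+1).-1).
Proof.
elim: q => [|q IH]; first by rewrite /= card_bool muln1 -{1}(expn1 2) leq_exp2l.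
rewrite [ctree _ _]/= !card_prod card_vec.
apply: (@leq_trans (2 ^ k * 2 ^ (k.+1 * (2 ^ q.+1).-1) * 2 ^ (k.+1 * (2 ^ q.+1).-1))).
  by rewrite leq_mul // leq_mul.
rewrite -!expnD leq_exp2l // [2 ^ q.+2]expnS.
have := expn_gt0 2 q.+1; move: (2 ^ q.+1) => X; nia.
Qed.

Lemma ctree_of_dtree k q (t : dtree (vec k)) :
  depth t <= q -> exists c : ctree k q, forall x, crun c x = run t x.
Proof.
elim: q t => [|q IH] [b|i t0 t1] //=; first by exists b.
  move=> _; have [c run_c] := IH (Leaf b) isT.
  by exists ([ffun => false], c, c) => x /=; rewrite run_c; case: ifP.
rewrite ltnS geq_max => /andP[/IH[c0 run_c0] /IH[c1 run_c1]].
by exists (i, c0, c1) => x /=; rewrite run_c0 run_c1.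
Qed.

Definition accepted_codes k (f : (vec k -> bool) -> bool) : {set vec k} :=
  [set y | f (hadamard y)].

Definition symdiff (T : finType) (A B : {set T}) : {set T} :=
  [set x | (x \in A) (+) (x \in B)].

Lemma symdiffK (T : finType) (A B : {set T}) : symdiff (symdiff A B) B = A.
Proof. by apply/setP => x; rewrite !inE -addbA addbb addbF. Qed.

Lemma card_symdiff (T : finType) (A B : {set T}) :
  #|symdiff A B| = #|A :\: B| + #|B :\: A|.
Proof.
rewrite -(cardsID B (symdiff A B)) addnC.
by congr (_ + _); apply: eq_card => x; rewrite !inE; case: (x \in A); case: (x \in B).
Qed.

Definition near_tree_sets k q : {set {set vec k}} :=
  [set A | [exists c : ctree k q, #|symdiff A (accepted_codes (crun c))| <= 2 ^ k %/ 3]].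

Lemma card_near_tree_sets k q : #|near_tree_sets k q| <=
  #|ctree k q| * #|[set D : {set vec k} | #|D| <= 2 ^ k %/ 3]|.
Proof.
set small := [set D : {set vec k} | _].
pose cover (p : ctree k q * {set vec k}) := symdiff p.2 (accepted_codes (crun p.1)).
have sub : near_tree_sets k q \subset cover @: setX [set: ctree k q] small.
  apply/subsetP => A; rewrite inE => /existsP[c near_c]; apply/imsetP.
  by exists (c, symdiff A (accepted_codes (crun c))); rewrite /cover ?inE ?symdiffK.
apply: leq_trans (subset_leq_card sub) _.
by apply: leq_trans (leq_imset_card _ _) _; rewrite cardsX cardsT.
Qed.

Lemma cube_small_sets_bound N S : S * 2 ^ (N - N %/ 3) <= 3 ^ N -> S ^ 3 * 4 ^ N <= 27 ^ N.
Proof.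
move=> le_S; apply: leq_trans (_ : (S * 2 ^ (N - N %/ 3)) ^ 3 <= _); last first.
  by rewrite -[27]/(3 ^ 3) expnAC leq_exp2r.
rewrite expnMn leq_mul2l -expnM -[4]/(2 ^ 2) -expnM leq_exp2l //; lia.
Qed.

Lemma exp_gap_27_32 m : 2 ^ m * 27 ^ (8 * m) <= 32 ^ (8 * m).
Proof.
have base : 2 * 27 ^ 8 <= 32 ^ 8 by rewrite !expnS expn0; lia.
rewrite (expnM 27) (expnM 32) -expnMn; move: (2 * 27 ^ 8) (32 ^ 8) base => a b.
by move=> le_ab; elim: m => // m IH; rewrite !expnS leq_mul.
Qed.

Lemma tree_bits_le k : 40 <= k ->
  3 * (k.+1 * 2 ^ ((k.-1) %/ 8).+1 + 2 * k.+1) <= 2 ^ (k - 3).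
Proof.
move=> k_ge40; set q := (k.-1) %/ 8.
have lin j : 2 * j + 2 <= 2 ^ j.+1 by elim: j => // j IH; rewrite expnS; lia.
have le_k : k.+1 <= 2 ^ (k %/ 2).+1 by have := lin (k %/ 2); lia.
have le_exp : 2 ^ (k %/ 2).+1 * 2 ^ q * 16 <= 2 ^ (k - 3).
  rewrite -[16]/(2 ^ 4) -!expnD leq_exp2l //.
  rewrite /q; lia.
have : k.+1 * 2 ^ q <= 2 ^ (k %/ 2).+1 * 2 ^ q by rewrite leq_mul2r le_k orbT.
have : k.+1 <= k.+1 * 2 ^ q by rewrite leq_pmulr ?expn_gt0.
rewrite [2 ^ q.+1]expnS; lia.
Qed.

Lemma card_near_tree_sets_le k M : 40 <= k -> M <= k ->
  M * #|near_tree_sets k ((k.-1) %/ 8)| <= 'C(2 ^ k, (2 ^ k)./2).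
Proof.
move=> k_ge40 le_Mk; set q := (k.-1) %/ 8; set N := 2 ^ k.
set F := #|ctree k q|; set S := #|[set D : {set vec k} | #|D| <= N %/ 3]|.
apply: leq_trans (_ : M * (F * S) <= _); first by rewrite leq_mul2l card_near_tree_sets orbT.
have N_eq : N = 8 * 2 ^ (k - 3) by rewrite /N -[8]/(2 ^ 3) -expnD subnKC //; lia.
have S_cube : S ^ 3 * 4 ^ N <= 27 ^ N.
  apply: cube_small_sets_bound; have := @card_sets_leq_bound (vec k) (N %/ 3).
  by rewrite card_vec; apply; apply: leq_div.
set e := k.+1 * 2 ^ q.+1 + 2 * k.+1.
have P_le : M * F * N.+1 <= 2 ^ e.
  have le_M : M <= 2 ^ k by apply: leq_trans le_Mk (ltnW (ltn_expl _ _)).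
  have le_F : F <= 2 ^ (k.+1 * 2 ^ q.+1).
    by apply: leq_trans (card_ctree k q) _; rewrite leq_exp2l // leq_mul2l leq_pred orbT.
  have le_N : N.+1 <= 2 ^ k.+1 by rewrite expnS mul2n -addnn -addn1 leq_add2l expn_gt0.
  apply: leq_trans (leq_mul (leq_mul le_M le_F) le_N) _.
  by rewrite -!expnD leq_exp2l //; lia.
(* Cubing clears the [N %/ 3] in the exponent, and [2 * 27^8 <= 32^8] leaves
   room for the [2^(N/8)] trees. *)
suff : (M * (F * S) * N.+1) ^ 3 <= (2 ^ N) ^ 3.
  rewrite leq_exp2r // => le_2N; rewrite -(leq_pmul2r (ltn0Sn N)).
  apply: leq_trans le_2N _.
  by rewrite mulnC exp2n_leq_bin_half.
rewrite -(leq_pmul2r (expn_gt0 4 N)).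
have -> : (2 ^ N) ^ 3 * 4 ^ N = 32 ^ N.
  by rewrite -expnM -[4]/(2 ^ 2) -expnM -expnD -[32]/(2 ^ 5) -expnM; congr (2 ^ _); lia.
apply: leq_trans (_ : 2 ^ (e * 3) * 27 ^ N <= _).
  have -> : (M * (F * S) * N.+1) ^ 3 * 4 ^ N = (M * F * N.+1) ^ 3 * (S ^ 3 * 4 ^ N).
    by rewrite !expnMn; ring.
  by rewrite expnM leq_mul // leq_exp2r.
apply: leq_trans (_ : 2 ^ (2 ^ (k - 3)) * 27 ^ N <= _).
  by rewrite leq_mul2r leq_exp2l // mulnC tree_bits_le // orbT.
by rewrite N_eq; apply: exp_gap_27_32.
Qed.

Lemma mem_near_tree_sets k q (A : {set vec k}) (t : dtree (vec k)) :
  0 < k -> depth t <= q -> #|A| = (2 ^ k)./2 ->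
  2 * #|A| + 3 * #|accepted_codes (run t) :\: A|
    <= 3 * #|A :&: accepted_codes (run t)| + #|~: A| ->
  A \in near_tree_sets k q.
Proof.
move=> k_gt0 /ctree_of_dtree[c run_c] card_A.
have -> : accepted_codes (run t) = accepted_codes (crun c).
  by apply/setP => y; rewrite !inE run_c.
set S := accepted_codes _ => good_t; rewrite inE; apply/existsP; exists c; rewrite -/S.
have := cardsID S A; have := cardsC A; rewrite card_symdiff card_vec.
have := odd_double_half (2 ^ k); rewrite oddX (negbTE (lt0n_neq0 k_gt0)) /= -muln2.
move: card_A good_t.
by move: (2 ^ k)./2 (2 ^ k) #|A| #|~: A| #|A :&: S| #|A :\: S| #|S :\: A|; lia.
Qed.

Local Open Scope ring_scope.

Lemma hadamard_far (R : realFieldType) k (A : {set vec k}) y :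
  y \notin A -> far (PA A) (1 / 3 : R) (hadamard y).
Proof.
move=> yNA z [y' y'A ->]; have neq_yy' : y != y' by apply: contraNneq yNA => ->.
have := hdist_hadamard neq_yy'; set d := hdist _ _ => d_half.
have d_gt0 : (0 < d)%N by move: d_half; case: d => // /esym/eqP; rewrite expn_eq0.
rewrite -d_half natrM; have : (0 : R) < d%:R by rewrite ltr0n.
lra.
Qed.

Lemma exists_ge_convex_comb (R : realFieldType) (I : finType) (w f : I -> R) a :
  (forall i, 0 <= w i) -> \sum_i w i = 1 -> a <= \sum_i w i * f i ->
  exists i, a <= f i.
Proof.
move=> w_ge0 w_sum1 le_a.
have [/existsP[i le_fi]|/existsPn lt_f] := boolP [exists i, a <= f i]; first by exists i.
have w_eq0 i : w i = 0.
  have gap_ge0 j : 0 <= w j * (a - f j) by rewrite mulr_ge0 // subr_ge0 ltW // ltNge lt_f.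
  have gap_sum0 : \sum_j w j * (a - f j) = 0.
    apply/eqP; rewrite eq_le sumr_ge0 // andbT.
    under eq_bigr do rewrite mulrBr.
    by rewrite sumrB -mulr_suml w_sum1 mul1r subr_le0.
  have /eqP := @psumr_eq0P _ _ _ _ (fun j _ => gap_ge0 j) gap_sum0 i isT.
  rewrite mulf_eq0 subr_eq0 => /orP[/eqP // | /eqP a_eq].
  by have := lt_f i; rewrite a_eq lexx.
by move: w_sum1; rewrite big1 // => /esym/eqP; rewrite oner_eq0.
Qed.

Section TesterTrees.

Variables (R : realFieldType) (k : nat) (T : prob_alg R (vec k)).

(* The support is indexed by ordinals since [dtree] has no decidable equality. *)
Let supp := pa_supp T.
Let weight (i : 'I_(size supp)) := (nth (0, Leaf false) supp i).1.
Let tree (i : 'I_(size supp)) := (nth (0, Leaf false) supp i).2.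

Lemma weight_ge0 i : 0 <= weight i.
Proof. exact: (all_nthP _ (pa_nonneg T)). Qed.

Lemma sum_weight : \sum_i weight i = 1.
Proof. by rewrite -(pa_sum1 T) (big_nth (0, Leaf false)) big_mkord. Qed.

Lemma depth_tree i : (depth (tree i) <= query_cplx T)%N.
Proof. by rewrite /query_cplx (big_nth (0, Leaf false)) big_mkord leq_bigmax. Qed.

Lemma sum_acc_prob_codes (B : {set vec k}) :
  \sum_(y in B) acc_prob T (hadamard y) =
  \sum_i weight i * #|B :&: accepted_codes (run (tree i))|%:R.
Proof.
under eq_bigr do rewrite /acc_prob (big_nth (0, Leaf false)) big_mkord big_mkcond.
rewrite exchange_big; apply: eq_bigr => i _ /=; rewrite -big_mkcondr /=.
rewrite (eq_bigl (mem (B :&: accepted_codes (run (tree i))))) ?sumr_const ?mulr_natr //.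
by move=> y; rewrite !inE.
Qed.

Lemma tester_good_tree (A : {set vec k}) :
  is_tester (PA A) (1 / 3) T ->
  exists2 t : dtree (vec k), (depth t <= query_cplx T)%N &
    (2 * #|A| + 3 * #|accepted_codes (run t) :\: A|
      <= 3 * #|A :&: accepted_codes (run t)| + #|~: A|)%N.
Proof.
move=> [accept reject].
pose u i := #|A :&: accepted_codes (run (tree i))|%:R : R.
pose v i := #|accepted_codes (run (tree i)) :\: A|%:R : R.
have sum_u : #|A|%:R * (2 / 3) <= \sum_i weight i * u i.
  rewrite -sum_acc_prob_codes mulr_natl -sumr_const; apply: ler_sum => y yA.
  by apply: accept; exists y.
have sum_v : \sum_i weight i * v i <= #|~: A|%:R * (1 / 3).
  under eq_bigr do rewrite /v setDE setIC.
  rewrite -sum_acc_prob_codes mulr_natl -sumr_const; apply: ler_sum => y.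
  by rewrite inE => /hadamard_far/reject.
have [i le_uv] : exists i, (2 * #|A|%:R - #|~: A|%:R) / 3 <= u i - v i.
  apply: exists_ge_convex_comb weight_ge0 sum_weight _.
  by under eq_bigr do rewrite mulrBr; rewrite sumrB; lra.
exists (tree i); first exact: depth_tree.
by rewrite -(ler_nat R) !natrD; move: le_uv; rewrite /u /v; lra.
Qed.

End TesterTrees.

Lemma natr_le_frac (R : realFieldType) (delta : R) M b c :
  0 < delta -> delta^-1 <= M%:R -> (M * b <= c)%N -> b%:R <= delta * c%:R.
Proof.
move=> delta_gt0 le_M le_Mb.
have one_le : 1 <= delta * M%:R.
  by rewrite -{1}(mulfV (lt0r_neq0 delta_gt0)) ler_wpM2l // ltW.
have : (M * b)%:R <= c%:R :> R by rewrite ler_nat.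
rewrite natrM; have : 0 <= b%:R :> R by [].
nra.
Qed.

Theorem lemma3p3 (R : realType) :
  exists c : R, 0 < c /\
  forall delta : R, 0 < delta ->
  exists K : nat, forall k : nat, (K <= k)%N ->
  exists Bad : {set {set vec k}},
    (#|Bad|%:R <= delta * #|[set A : {set vec k} | #|A| == (2 ^ k)./2]|%:R) /\
    forall A : {set vec k}, #|A| = (2 ^ k)./2 -> A \notin Bad ->
    forall T : prob_alg R (vec k),
      is_tester (PA A) (1 / 3 : R) T -> c * k%:R <= (query_cplx T)%:R.
Proof.
exists (1 / 8); split=> [|delta delta_gt0]; first lra.
pose M := (Num.bound delta^-1).+1.
have le_M : delta^-1 <= M%:R.
  by apply/ltW/(lt_trans (archi_boundP _)); rewrite ?ltr_nat // invr_ge0 ltW.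
exists (maxn 40 M) => k; rewrite geq_max => /andP[k_ge40 le_Mk].
exists (near_tree_sets k ((k.-1) %/ 8)); split.
  rewrite card_draws card_vec; apply: natr_le_frac delta_gt0 le_M _.
  exact: card_near_tree_sets_le.
move=> A card_A A_far T tester; rewrite leNgt; apply/negP => lt_cplx.
have [t depth_t good_t] := tester_good_tree tester.
have lt_k : (8 * query_cplx T < k)%N by rewrite -(ltr_nat R) natrM; lra.
move/negP: A_far; apply.
by apply: (mem_near_tree_sets _ (leq_trans depth_t _) card_A good_t); lia.
Qed.
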